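(* Let $(F_X,F_Y,F_Z)$ be distribution functions, $F=F_XF_Z$, $G=F_YF_Z$, $K=F_Y+F_Z-F_YF_Z$. Let $\mathbf\Phi$, $\mathbf\Psi$, $\mathbf X$ be nonempty sets of functions $[0,1]\to[0,1]$ such that every triple $(\phi,\psi,\chi)\in\mathbf\Phi\times\mathbf\Psi\times\mathbf X$ is associated to $(F_X,F_Y,F_Z)$. Let $\phi_{\min}=\inf\mathbf\Phi$, $\phi_{\max}=\sup\mathbf\Phi$, $\psi_{\min}=\inf\mathbf\Psi$, $\psi_{\max}=\sup\mathbf\Psi$, $\chi_{\min}=\inf\mathbf X$, $\chi_{\max}=\sup\mathbf X$ (pointwise). Then every triple $(\phi,\psi,\chi)$ with $\phi\in\mathbf\Phi\cup\{\phi_{\min},\phi_{\max}\}$, $\psi\in\mathbf\Psi\cup\{\psi_{\min},\psi_{\max}\}$, $\chi\in\mathbf X\cup\{\chi_{\min},\chi_{\max}\}$ is associated to $(F_X,F_Y,F_Z)$.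
   Context: Distribution functions are non-decreasing maps $\mathbb R\to[0,1]$. A triple $(\phi,\psi,\chi)$ of functions $[0,1]\to[0,1]$ is associated to $(F_X,F_Y,F_Z)$ if: $\phi(F(x))=F_X(x)$ whenever $F(x)>0$, $\psi(G(y))=F_Y(y)$ whenever $G(y)>0$, $\chi(K(y))=F_Y(y)$ whenever $K(y)<1$; $\phi$ and $\psi$ are non-decreasing with $\phi(0)=\psi(0)=0$, $\phi(1)=\psi(1)=1$, and $\phi(u)/u$, $\psi(v)/v$ non-increasing on $(0,1]$; and $\chi$ is non-decreasing with $\chi(0)=0$, $\chi(1)=1$, and $\chi_*(w)=\frac{1-\chi(w)}{w-\chi(w)}$ (values in $[1,\infty]$) non-increasing on $[0,1]$. *)

From HB Require Import structures.
From mathcomp Require Import all_boot all_order all_algebra.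
From mathcomp Require Import boolp classical_sets reals constructive_ereal.
Set Implicit Arguments. Unset Strict Implicit. Unset Printing Implicit Defensive.
Import Order.TTheory GRing.Theory Num.Theory.
Local Open Scope classical_set_scope.
Local Open Scope ring_scope.

Section Defs.
Variable R : realType.

Definition distribution_function (F : R -> R) : Prop :=
  (forall x y, x <= y -> F x <= F y) /\ (forall x, 0 <= F x <= 1).

(* a function [0,1] -> [0,1] (represented as R -> R, only values on [0,1] matter) *)
Definition unit_fun (f : R -> R) : Prop :=
  forall u, 0 <= u <= 1 -> 0 <= f u <= 1.

Definition phi_cond (phi : R -> R) : Prop :=
  (forall u v, 0 <= u -> u <= v -> v <= 1 -> phi u <= phi v) /\
  phi 0 = 0 /\ phi 1 = 1 /\
  (forall u v, 0 < u -> u <= v -> v <= 1 -> phi v / v <= phi u / u).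

(* chi_*(w) = (1 - chi w)/(w - chi w) in [1, +oo];
   convention: x/0 = +oo for w < 1 (when chi w = w), and chi_*(1) = 1
   (the 0/0 case at w = 1 takes the least admissible value) *)
Definition chi_star (chi : R -> R) (w : R) : \bar R :=
  if w == 1 then 1%E
  else if chi w == w then +oo%E
  else ((1 - chi w) / (w - chi w))%:E.

Definition chi_cond (chi : R -> R) : Prop :=
  (forall u v, 0 <= u -> u <= v -> v <= 1 -> chi u <= chi v) /\
  chi 0 = 0 /\ chi 1 = 1 /\
  (forall w, 0 <= w -> w <= 1 -> (1 <= chi_star chi w)%E) /\
  (forall v w, 0 <= v -> v <= w -> w <= 1 -> (chi_star chi w <= chi_star chi v)%E).

Definition associated (FX FY FZ phi psi chi : R -> R) : Prop :=
  (forall x, 0 < FX x * FZ x -> phi (FX x * FZ x) = FX x) /\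
  (forall y, 0 < FY y * FZ y -> psi (FY y * FZ y) = FY y) /\
  (forall y, FY y + FZ y - FY y * FZ y < 1 ->
             chi (FY y + FZ y - FY y * FZ y) = FY y) /\
  phi_cond phi /\ phi_cond psi /\ chi_cond chi.

Definition fun_inf (S : set (R -> R)) : R -> R :=
  fun u => inf [set f u | f in S].
Definition fun_sup (S : set (R -> R)) : R -> R :=
  fun u => sup [set f u | f in S].

End Defs.

From HB Require Import structures.
From mathcomp Require Import all_boot all_order all_algebra.
From mathcomp Require Import boolp classical_sets reals constructive_ereal.
From mathcomp Require Import lra.
Set Implicit Arguments. Unset Strict Implicit.
Import Order.TTheory GRing.Theory Num.Theory.
Local Open Scope classical_set_scope.
Local Open Scope ring_scope.

(* Every requirement in the definition of an associated triple is pointwise: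
   either an equation f p = y, or, once the denominators of phi(u)/u and of
   chi_*(w) are cleared, an inequality a * f p <= b + c * f q with a, c >= 0.
   Such an inequality, holding for all f in a nonempty family of functions
   with values in [0, 1], passes to the pointwise infimum (bound the left side
   by one member and take the infimum on the right) and to the pointwise
   supremum (symmetrically). *)

Section AssociatedTriples.
Variable R : realType.
Implicit Types (p q u v w a b c x y : R) (f g phi chi : R -> R).

Definition nondecreasing01 f := forall u v, 0 <= u -> u <= v -> v <= 1 -> f u <= f v.

Definition phi_cond_lin phi :=
  nondecreasing01 phi /\
  phi 0 = 0 /\ phi 1 = 1 /\
  (forall u v, 0 < u -> u <= v -> v <= 1 -> u * phi v <= v * phi u).

Lemma phi_condE phi : phi_cond phi <-> phi_cond_lin phi.
Proof.
have ratioE u v : 0 < u -> u <= v -> (phi v / v <= phi u / u) = (u * phi v <= v * phi u).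
  move=> u0 uv; have v0 : 0 < v := lt_le_trans u0 uv.
  by rewrite ler_pdivrMr // mulrAC ler_pdivlMr // mulrC [v * _]mulrC.
split=> -[mono [phi0 [phi1 ratio]]]; do 3 split => //.
- by move=> u v u0 uv v1; rewrite -ratioE //; apply: ratio.
- by move=> u v u0 uv v1; rewrite ratioE //; apply: ratio.
Qed.

Definition chi_cond_lin chi :=
  nondecreasing01 chi /\
  chi 0 = 0 /\ chi 1 = 1 /\
  (forall w, 0 <= w -> w <= 1 -> chi w <= w) /\
  (forall v w, 0 <= v -> v <= w -> w <= 1 ->
     (1 - v) * chi w <= (w - v) + (1 - w) * chi v).

Lemma one_le_chi_star chi w : w < 1 -> (1 <= chi_star chi w)%E = (chi w <= w).
Proof.
move=> w1; rewrite /chi_star (lt_eqF w1).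
have [->|ne] := eqVneq (chi w) w; first by rewrite leey lexx.
rewrite lee_fin; have [lt|le] := ltP (chi w) w.
- by rewrite ler_pdivlMr ?subr_gt0 // mul1r; lra.
- have gt : w < chi w by rewrite lt_neqAle eq_sym ne.
  by rewrite ler_ndivlMr ?subr_lt0 // mul1r; lra.
Qed.

Lemma chi_star_le chi v w : 0 <= v -> v <= w -> w < 1 -> chi v <= v -> chi w <= w ->
  (chi_star chi w <= chi_star chi v)%E =
  ((1 - v) * chi w <= (w - v) + (1 - w) * chi v).
Proof.
move=> v0 vw w1 cv cw; have v1 : v < 1 := le_lt_trans vw w1.
rewrite /chi_star (lt_eqF w1) (lt_eqF v1).
have [->|nv] := eqVneq (chi v) v; first by rewrite leey; apply/esym; nra.
have {}cv : chi v < v by rewrite lt_neqAle nv.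
have [ew|nw] := eqVneq (chi w) w.
  by rewrite leye_eq /=; apply/esym; apply: negbTE; rewrite -ltNge; nra.
have {}cw : chi w < w by rewrite lt_neqAle nw.
rewrite lee_fin ler_pdivrMr ?subr_gt0 // mulrAC ler_pdivlMr ?subr_gt0 //.
by apply/idP/idP => ?; nra.
Qed.

Lemma chi_condE chi : chi_cond chi <-> chi_cond_lin chi.
Proof.
split=> -[mono [chi0 [chi1 rest]]]; do 3 split => //.
- case: rest => ge1 star_mono.
  have below w : 0 <= w -> w <= 1 -> chi w <= w.
    move=> w0 w1; have [->|wn1] := eqVneq w 1; first by rewrite chi1.
    by rewrite -one_le_chi_star ?ge1 // lt_neqAle wn1.
  split=> // v w v0 vw w1; have [w_1|wn1] := eqVneq w 1.
    by rewrite w_1 chi1; lra.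
  have {}w1 : w < 1 by rewrite lt_neqAle wn1.
  by rewrite -chi_star_le ?star_mono ?below //; lra.
- case: rest => below lin.
  have ge1 w : 0 <= w -> w <= 1 -> (1 <= chi_star chi w)%E.
    move=> w0 w1; have [->|wn1] := eqVneq w 1; first by rewrite /chi_star eqxx.
    by rewrite one_le_chi_star ?below // lt_neqAle wn1.
  split=> // v w v0 vw w1; have [w_1|wn1] := eqVneq w 1.
    by rewrite {1}/chi_star w_1 eqxx ge1 //; lra.
  have {}w1 : w < 1 by rewrite lt_neqAle wn1.
  by rewrite chi_star_le ?lin ?below //; lra.
Qed.

Section InfSupEnvelope.
Variable S : set (R -> R).
Hypothesis S0 : S !=set0.
Hypothesis S01 : forall f, S f -> unit_fun f.

Lemma fun_inf_le f p : 0 <= p <= 1 -> S f -> fun_inf S p <= f p.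
Proof.
move=> p01 Sf; apply: ge_inf; last by exists f.
by exists 0 => _ [h Sh <-]; case/andP: (S01 Sh p01).
Qed.

Lemma le_fun_sup f p : 0 <= p <= 1 -> S f -> f p <= fun_sup S p.
Proof.
move=> p01 Sf; apply: ub_le_sup; last by exists f.
by exists 1 => _ [h Sh <-]; case/andP: (S01 Sh p01).
Qed.

Lemma le_affine_fun_inf p x b c : 0 <= c ->
  (forall f, S f -> x <= b + c * f p) -> x <= b + c * fun_inf S p.
Proof.
rewrite le_eqVlt => /predU1P[<-|c0] h; first by have [f /h] := S0; rewrite !mul0r.
rewrite -lerBlDl -ler_pdivrMl //; apply: lb_le_inf.
  by have [f Sf] := S0; exists (f p), f.
by move=> _ [f /h + <-]; rewrite ler_pdivrMl // lerBlDl.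
Qed.

Lemma scale_fun_sup_le p a y : 0 <= a ->
  (forall f, S f -> a * f p <= y) -> a * fun_sup S p <= y.
Proof.
rewrite le_eqVlt => /predU1P[<-|a0] h; first by have [f /h] := S0; rewrite !mul0r.
rewrite -ler_pdivlMl //; apply: ge_sup.
  by have [f Sf] := S0; exists (f p), f.
by move=> _ [f /h + <-]; rewrite ler_pdivlMl.
Qed.

Variable g : R -> R.
Hypothesis gS : S g \/ g = fun_inf S \/ g = fun_sup S.

Lemma envelope_affine p q a b c : 0 <= p <= 1 -> 0 <= q <= 1 -> 0 <= a -> 0 <= c ->
  (forall f, S f -> a * f p <= b + c * f q) -> a * g p <= b + c * g q.
Proof.
move=> p01 q01 a0 c0 h; case: gS => [/h // | [->|->]].
- apply: le_affine_fun_inf => // f Sf; apply: le_trans (h f Sf).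
  by apply: (ler_wpM2l a0); apply: fun_inf_le.
- apply: scale_fun_sup_le => // f Sf; apply: le_trans (h f Sf) _.
  by rewrite lerD2l; apply: (ler_wpM2l c0); apply: le_fun_sup.
Qed.

Lemma envelope_eq p y : 0 <= p <= 1 -> (forall f, S f -> f p = y) -> g p = y.
Proof.
move=> p01 h.
have up : 1 * g p <= y + 0 * g p by apply: envelope_affine => // f /h ->; lra.
have lo : 0 * g p <= - y + 1 * g p by apply: envelope_affine => // f /h ->; lra.
lra.
Qed.

Lemma nondecreasing01_envelope :
  (forall f, S f -> nondecreasing01 f) -> nondecreasing01 g.
Proof.
move=> Smono u v u0 uv v1.
have : 1 * g u <= 0 + 1 * g v.
  apply: envelope_affine; rewrite ?ler01 //; try (apply/andP; split; lra).
  by move=> f /Smono mono; rewrite add0r !mul1r; apply: mono.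
lra.
Qed.

Lemma phi_cond_envelope : (forall f, S f -> phi_cond f) -> phi_cond g.
Proof.
move=> Sphi; have {}Sphi f : S f -> phi_cond_lin f by move/Sphi/phi_condE.
apply/phi_condE; split; [|split; [|split]].
- by apply: nondecreasing01_envelope => f /Sphi[].
- by apply: envelope_eq; [rewrite lexx ler01 | move=> f /Sphi[_ []]].
- by apply: envelope_eq; [rewrite lexx ler01 | move=> f /Sphi[_ [_ []]]].
- move=> u v u0 uv v1.
  have : u * g v <= 0 + v * g u.
    apply: envelope_affine; try (apply/andP; split); try lra.
    by move=> f /Sphi[_ [_ [_ ratio]]]; rewrite add0r; apply: ratio.
  lra.
Qed.

Lemma chi_cond_envelope : (forall f, S f -> chi_cond f) -> chi_cond g.
Proof.
move=> Schi; have {}Schi f : S f -> chi_cond_lin f by move/Schi/chi_condE.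
apply/chi_condE; split; [|split; [|split; [|split]]].
- by apply: nondecreasing01_envelope => f /Schi[].
- by apply: envelope_eq; [rewrite lexx ler01 | move=> f /Schi[_ []]].
- by apply: envelope_eq; [rewrite lexx ler01 | move=> f /Schi[_ [_ []]]].
- move=> w w0 w1.
  have : 1 * g w <= w + 0 * g w.
    apply: envelope_affine; try (apply/andP; split); try lra.
    by move=> f /Schi[_ [_ [_ [below _]]]]; rewrite mul1r mul0r addr0; apply: below.
  lra.
- move=> v w v0 vw w1.
  apply: envelope_affine; try (apply/andP; split); try lra.
  by move=> f /Schi[_ [_ [_ [_ lin]]]]; apply: lin.
Qed.

End InfSupEnvelope.

Lemma unit_interval_mul x y : 0 <= x <= 1 -> 0 <= y <= 1 -> 0 <= x * y <= 1.
Proof. by move=> /andP[? ?] /andP[? ?]; apply/andP; split; nra. Qed.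

Lemma unit_interval_psum x y : 0 <= x <= 1 -> 0 <= y <= 1 -> 0 <= x + y - x * y <= 1.
Proof. by move=> /andP[? ?] /andP[? ?]; apply/andP; split; nra. Qed.

End AssociatedTriples.

Theorem proposition4 (R : realType) (FX FY FZ : R -> R)
  (Phi Psi Chi : set (R -> R)) :
  distribution_function FX -> distribution_function FY ->
  distribution_function FZ ->
  Phi !=set0 -> Psi !=set0 -> Chi !=set0 ->
  (forall f, Phi f -> unit_fun f) ->
  (forall f, Psi f -> unit_fun f) ->
  (forall f, Chi f -> unit_fun f) ->
  (forall phi psi chi, Phi phi -> Psi psi -> Chi chi ->
     associated FX FY FZ phi psi chi) ->
  forall phi psi chi,
    (Phi phi \/ phi = fun_inf Phi \/ phi = fun_sup Phi) ->
    (Psi psi \/ psi = fun_inf Psi \/ psi = fun_sup Psi) ->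
    (Chi chi \/ chi = fun_inf Chi \/ chi = fun_sup Chi) ->
    associated FX FY FZ phi psi chi.
Proof.
move=> [_ FX01] [_ FY01] [_ FZ01] Phi0 Psi0 Chi0 Phi01 Psi01 Chi01 assoc
  phi psi chi hphi hpsi hchi.
have [phi0 Phi_phi0] := Phi0; have [psi0 Psi_psi0] := Psi0.
have [chi0 Chi_chi0] := Chi0.
have assocPhi f (Phi_f : Phi f) := assoc f psi0 chi0 Phi_f Psi_psi0 Chi_chi0.
have assocPsi f (Psi_f : Psi f) := assoc phi0 f chi0 Phi_phi0 Psi_f Chi_chi0.
have assocChi f (Chi_f : Chi f) := assoc phi0 psi0 f Phi_phi0 Psi_psi0 Chi_f.
split; [|split; [|split; [|split; [|split]]]].
- move=> x Fx; apply: (envelope_eq Phi0 Phi01 hphi); first exact: unit_interval_mul.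
  by move=> f /assocPhi[eqF _]; apply: eqF.
- move=> y Gy; apply: (envelope_eq Psi0 Psi01 hpsi); first exact: unit_interval_mul.
  by move=> f /assocPsi[_ [eqG _]]; apply: eqG.
- move=> y Ky; apply: (envelope_eq Chi0 Chi01 hchi); first exact: unit_interval_psum.
  by move=> f /assocChi[_ [_ [eqK _]]]; apply: eqK.
- by apply: (phi_cond_envelope Phi0 Phi01 hphi) => f /assocPhi[_ [_ [_ []]]].
- by apply: (phi_cond_envelope Psi0 Psi01 hpsi) => f /assocPsi[_ [_ [_ [_ []]]]].
- by apply: (chi_cond_envelope Chi0 Chi01 hchi) => f /assocChi[_ [_ [_ [_ []]]]].
Qed.
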